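(* Let $G_r$ be a cactus request graph, i.e., a directed graph such that any two distinct cycles of its underlying undirected graph share at most a single node. Then $\mathrm{ew}_{\mathcal X}(G^{\mathcal X}_r)\le 2$ holds for every extraction order $G^{\mathcal X}_r$ of $G_r$.
   Context: An extraction order of a directed graph $G_r=(V_r,E_r)$ is a rooted directed acyclic graph $G^{\mathcal X}_r=(V_r,E^{\mathcal X}_r,s_r)$ in which every node is reachable from $s_r$ and $E^{\mathcal X}_r$ is obtained from $E_r$ by reversing some (possibly no) edges. A confluence from $i$ to $j$ is a pair of directed paths in $E^{\mathcal X}_r$ from $i$ to $j$ sharing no node other than $i,j$. For $e\in E^{\mathcal X}_r$, its label set $\mathcal L_e$ is the set of nodes $j$ such that $e$ lies on some confluence with target $j$. The outgoing edges of each node are partitioned into bags: classes of the equivalence relation generated by $e\sim e'$ iff $\mathcal L_e\cap\mathcal L_{e'}\neq\emptyset$; a bag's label set is $\mathcal L_B=\bigcup_{e\in B}\mathcal L_e$. The extraction width is $\mathrm{ew}_{\mathcal X}(G^{\mathcal X}_r)=1+\max|\mathcal L_B|$ over all bags of all nodes. *)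

From mathcomp Require Import all_boot.
From Stdlib Require Import ClassicalEpsilon.
Set Implicit Arguments. Unset Strict Implicit. Unset Printing Implicit Defensive.

Definition decP (P : Prop) : bool :=
  if excluded_middle_informative P then true else false.

Section ExtractionWidth.
Variables (V E : finType) (src tgt : E -> V).

(* An undirected traversal step: (e, false) traverses e from src to tgt,
   (e, true) traverses e from tgt to src. *)
Definition ufrom (eb : E * bool) : V := if eb.2 then tgt eb.1 else src eb.1.
Definition uto (eb : E * bool) : V := if eb.2 then src eb.1 else tgt eb.1.

Fixpoint uwalk (x : V) (c : seq (E * bool)) (y : V) : bool :=
  match c with
  | [::] => x == y
  | eb :: c' => (ufrom eb == x) && uwalk (uto eb) c' y
  end.

Definition ucycle (x : V) (c : seq (E * bool)) : bool :=
  [&& c != [::], uwalk x c x, uniq (map fst c) & uniq (map uto c)].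

Definition cycle_edges (c : seq (E * bool)) : {set E} := [set e | e \in map fst c].
Definition cycle_nodes (c : seq (E * bool)) : {set V} := [set v | v \in map uto c].

Definition cactus : Prop :=
  forall (x1 x2 : V) (c1 c2 : seq (E * bool)),
    ucycle x1 c1 -> ucycle x2 c2 -> cycle_edges c1 != cycle_edges c2 ->
    #|cycle_nodes c1 :&: cycle_nodes c2| <= 1.

(* An orientation [o] : o e = true means edge e is reversed. *)
Variable o : E -> bool.

Definition osrc (e : E) : V := if o e then tgt e else src e.
Definition otgt (e : E) : V := if o e then src e else tgt e.

Definition oadj : rel V := fun x y => [exists e, (osrc e == x) && (otgt e == y)].

(* G^X_r = (V, E^X, s) is a rooted DAG in which every node is reachable from s. *)
Definition extraction_order (s : V) : Prop :=
  (forall e : E, ~~ connect oadj (otgt e) (osrc e)) /\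
  (forall v : V, connect oadj s v).

Fixpoint dwalk (i : V) (p : seq E) (j : V) : bool :=
  match p with
  | [::] => i == j
  | e :: p' => (osrc e == i) && dwalk (otgt e) p' j
  end.

Definition dverts (i : V) (p : seq E) : seq V := i :: map otgt p.

Definition dpath (i : V) (p : seq E) (j : V) : bool :=
  dwalk i p j && uniq (dverts i p).

Definition confluence (i j : V) (p q : seq E) : Prop :=
  [/\ dpath i p j, dpath i q j, p != q &
      forall x, x \in dverts i p -> x \in dverts i q -> (x == i) || (x == j)].

Definition label (e : E) : {set V} :=
  [set j | decP (exists (i : V) (p q : seq E),
                   confluence i j p q /\ (e \in p \/ e \in q))].

(* Generating relation of bags: outgoing edges of the same node whose label
   sets intersect; bags are the classes of its reflexive-transitive
   (symmetric) closure. *)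
Definition bag_rel : rel E :=
  fun e e' => (osrc e == osrc e') && ~~ [disjoint label e & label e'].

Definition bag (e : E) : {set E} := [set e' | connect bag_rel e e'].

Definition bag_label (e : E) : {set V} := \bigcup_(e' in bag e) label e'.

Definition ew : nat := (\max_(e : E) #|bag_label e|).+1.

End ExtractionWidth.

(* In a cactus every edge of a loop-free orientation carries at most one
   label.  A confluence (p, q) from i to j closes up, in the underlying
   undirected graph, into the cycle "p, then q backwards", in which j is the
   only node entered by two cycle edges.  If an edge e lies on confluences
   towards j1 and j2, the two cycles share the two distinct endpoints of e, so
   in a cactus they have the same edge set, hence the same sink: j1 = j2.
   Edges related by bag_rel thus have equal labels, every bag has the label
   set of each of its edges, and ew <= 1 + 1. *)

From Pilot Require Import Defs.
From mathcomp Require Import all_boot.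
From Stdlib Require Import ClassicalEpsilon.
Set Implicit Arguments. Unset Strict Implicit. Unset Printing Implicit Defensive.

Lemma decPP (P : Prop) : reflect P (Defs.decP P).
Proof. by rewrite /Defs.decP; case: excluded_middle_informative => h; constructor. Qed.

Lemma uniq_map_inj_in (T1 T2 : eqType) (f : T1 -> T2) (s : seq T1) :
  uniq (map f s) -> {in s &, injective f}.
Proof.
elim: s => [|x s IH] //= /andP[fx_notin us] a b.
rewrite !in_cons => /orP[/eqP->|ha] /orP[/eqP->|hb] // fab.
- by move: fx_notin; rewrite fab map_f.
- by move: fx_notin; rewrite -fab map_f.
- exact: IH.
Qed.

Section Walks.
Variables (V E : finType) (src tgt : E -> V) (o : E -> bool).

Local Notation osrc := (osrc src tgt o).
Local Notation otgt := (otgt src tgt o).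
Local Notation dwalk := (dwalk src tgt o).
Local Notation dverts := (dverts src tgt o).
Local Notation dpath := (dpath src tgt o).
Local Notation uwalk := (uwalk src tgt).
Local Notation ufrom := (ufrom src tgt).
Local Notation uto := (uto src tgt).

Definition fwd_step (e : E) : E * bool := (e, o e).
Definition bwd_step (e : E) : E * bool := (e, ~~ o e).

Lemma ufrom_fwd e : ufrom (fwd_step e) = osrc e.
Proof. by rewrite /Defs.ufrom /Defs.osrc /=; case: (o e). Qed.

Lemma uto_fwd e : uto (fwd_step e) = otgt e.
Proof. by rewrite /Defs.uto /Defs.otgt /=; case: (o e). Qed.

Lemma ufrom_bwd e : ufrom (bwd_step e) = otgt e.
Proof. by rewrite /Defs.ufrom /Defs.otgt /=; case: (o e). Qed.

Lemma uto_bwd e : uto (bwd_step e) = osrc e.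
Proof. by rewrite /Defs.uto /Defs.osrc /=; case: (o e). Qed.

Lemma uwalk_cat x c1 y c2 z : uwalk x c1 y -> uwalk y c2 z -> uwalk x (c1 ++ c2) z.
Proof.
elim: c1 x => [|eb c1 IH] x /=; first by move/eqP->.
by case/andP=> -> /IH.
Qed.

Lemma uwalk_rcons x c eb y :
  uwalk x (rcons c eb) y = uwalk x c (ufrom eb) && (uto eb == y).
Proof.
elim: c x => [|eb' c IH] x /=; first by rewrite eq_sym.
by rewrite IH andbA.
Qed.

Lemma dwalk_uwalk_fwd x p y : dwalk x p y -> uwalk x (map fwd_step p) y.
Proof.
elim: p x => [|e p IH] x //=.
by case/andP=> /eqP <- /IH; rewrite ufrom_fwd uto_fwd eqxx.
Qed.

Lemma dwalk_uwalk_bwd x q y : dwalk x q y -> uwalk y (map bwd_step (rev q)) x.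
Proof.
elim: q x => [|e q IH] x /=; first by move/eqP->.
case/andP=> /eqP <- /IH hq.
by rewrite rev_cons map_rcons uwalk_rcons ufrom_bwd hq uto_bwd /=.
Qed.

Lemma dwalk_dverts i p j : dwalk i p j -> dverts i p = rcons (map osrc p) j.
Proof.
rewrite /Defs.dverts.
elim: p i => [|e p IH] i /=; first by move/eqP->.
by case/andP=> /eqP <- /IH ->.
Qed.

Lemma dwalk_mem_osrc i p j e : dwalk i p j -> e \in p -> osrc e \in dverts i p.
Proof. by move/dwalk_dverts->; rewrite mem_rcons in_cons => pe; rewrite map_f ?orbT. Qed.

Lemma dverts_mem_otgt i p e : e \in p -> otgt e \in dverts i p.
Proof. by move=> pe; rewrite in_cons map_f ?orbT. Qed.

Lemma dpath_loop x p : dpath x p x -> p = [::].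
Proof.
case: p => [|e p] // /andP[hw].
rewrite (dwalk_dverts hw) rcons_uniq => /andP[/negP hn _]; case: hn.
by case/andP: hw => /eqP <- _; rewrite mem_head.
Qed.

Lemma dpath_edge i p j e :
  dpath i p j -> e \in p -> osrc e = i -> otgt e = j -> p = [:: e].
Proof.
case: p => [|e' p] // /andP[/= /andP[/eqP hs hw] /andP[i_notin up]].
rewrite in_cons => /orP[/eqP He | pe] esrc etgt.
  by subst e'; rewrite etgt in hw up; rewrite (@dpath_loop j p) //; apply/andP.
by move: i_notin; rewrite -esrc (dwalk_mem_osrc hw pe).
Qed.

End Walks.

Section Confluences.
Variables (V E : finType) (src tgt : E -> V) (o : E -> bool).

Local Notation osrc := (osrc src tgt o).
Local Notation otgt := (otgt src tgt o).
Local Notation dverts := (dverts src tgt o).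
Local Notation conf := (confluence src tgt o).
Local Notation cycle_nodes := (cycle_nodes src tgt).

Hypothesis no_loop : forall e, osrc e != otgt e.

Definition confluence_cycle (p q : seq E) : seq (E * bool) :=
  map (fwd_step o) p ++ map (bwd_step o) (rev q).

Lemma map_fst_confluence_cycle p q : map fst (confluence_cycle p q) = p ++ rev q.
Proof. by rewrite map_cat -!map_comp !map_id_in. Qed.

Lemma map_uto_confluence_cycle p q :
  map (uto src tgt) (confluence_cycle p q) = map otgt p ++ rev (map osrc q).
Proof.
rewrite map_cat -map_rev -!map_comp.
by rewrite (eq_map (@uto_fwd _ _ src tgt o)) (eq_map (@uto_bwd _ _ src tgt o)).
Qed.

Lemma mem_confluence_cycle_edges p q e :
  (e \in cycle_edges (confluence_cycle p q)) = (e \in p ++ q).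
Proof. by rewrite inE map_fst_confluence_cycle !mem_cat mem_rev. Qed.

Lemma mem_confluence_cycle_nodes p q v :
  (v \in cycle_nodes (confluence_cycle p q)) = (v \in map otgt p) || (v \in map osrc q).
Proof. by rewrite inE map_uto_confluence_cycle mem_cat mem_rev. Qed.

Section ConfluencePaths.
Variables (i j : V) (p q : seq E).
Hypothesis pq_conf : conf i j p q.

Lemma confluence_sym : conf i j q p.
Proof. by case: pq_conf => hp hq hpq hx; split; rewrite 1?eq_sym // => x /hx /[apply]. Qed.

Let p_dpath : dpath src tgt o i p j. Proof. by case: pq_conf. Qed.
Let p_walk : dwalk src tgt o i p j. Proof. by case/andP: p_dpath. Qed.
Let p_uniq : uniq (dverts i p). Proof. by case/andP: p_dpath. Qed.

Lemma confluence_common x :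
  x \in dverts i p -> x \in dverts i q -> x = i \/ x = j.
Proof. by case: pq_conf => _ _ _ h /h /[apply] /orP[] /eqP; [left | right]. Qed.

Lemma confluence_neq : i != j.
Proof.
apply/eqP => ij; case: pq_conf => hp hq /eqP; rewrite -{}ij in hp hq.
by rewrite (dpath_loop hp) (dpath_loop hq).
Qed.

Lemma confluence_uniq_otgt : uniq (map otgt p).
Proof. by case/andP: p_uniq. Qed.

Lemma confluence_uniq_osrc : uniq (map osrc p).
Proof. by move: p_uniq; rewrite (dwalk_dverts p_walk) rcons_uniq => /andP[]. Qed.

Lemma confluence_source_notin : i \notin map otgt p.
Proof. by case/andP: p_uniq. Qed.

Lemma confluence_target_notin : j \notin map osrc p.
Proof. by move: p_uniq; rewrite (dwalk_dverts p_walk) rcons_uniq => /andP[]. Qed.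

Lemma confluence_target_in : j \in map otgt p.
Proof.
have : j \in dverts i p by rewrite (dwalk_dverts p_walk) mem_rcons mem_head.
by rewrite in_cons eq_sym (negbTE confluence_neq).
Qed.

Lemma confluence_source_in : i \in map osrc p.
Proof.
have : i \in dverts i p by rewrite mem_head.
by rewrite (dwalk_dverts p_walk) mem_rcons in_cons (negbTE confluence_neq).
Qed.

Lemma confluence_cross a b :
  a \in p -> b \in q -> otgt a = otgt b -> otgt a = j.
Proof.
move=> ap bq ab.
have [ai|//] : otgt a = i \/ otgt a = j.
  apply: (confluence_common (x := otgt a)); first exact: dverts_mem_otgt ap.
  by rewrite ab; apply: dverts_mem_otgt bq.
by move: confluence_source_notin; rewrite -ai map_f.
Qed.

End ConfluencePaths.

Section ConfluenceCycle.
Variables (i j : V) (p q : seq E).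
Hypothesis pq_conf : conf i j p q.

Let qp_conf := confluence_sym pq_conf.
Let p_walk : dwalk src tgt o i p j. Proof. by case: pq_conf => /andP[]. Qed.
Let q_walk : dwalk src tgt o i q j. Proof. by case: qp_conf => /andP[]. Qed.

(* A common edge e ends at j, so it either starts at i, forcing p = q = [:: e],
   or is a loop at j. *)
Lemma confluence_disjoint e : e \in p -> e \in q -> False.
Proof.
case: (pq_conf) => hp hq /eqP pq _ pe qe.
have etgt : otgt e = j := confluence_cross pq_conf pe qe erefl.
have [esrc|ej] : osrc e = i \/ osrc e = j.
  exact: (confluence_common pq_conf (dwalk_mem_osrc p_walk pe) (dwalk_mem_osrc q_walk qe)).
by apply: pq; rewrite (dpath_edge hp pe esrc etgt) (dpath_edge hq qe esrc etgt).
by move: (no_loop e); rewrite ej etgt eqxx.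
Qed.

Lemma confluence_sink a b :
  a \in p ++ q -> b \in p ++ q -> a != b -> otgt a = otgt b -> otgt a = j.
Proof.
rewrite !mem_cat => /orP[ap|aq] /orP[bp|bq] /eqP nab ab.
- by case: nab; apply: (uniq_map_inj_in (confluence_uniq_otgt pq_conf) ap bp ab).
- exact: (confluence_cross pq_conf ap bq ab).
- exact: (confluence_cross qp_conf aq bp ab).
- by case: nab; apply: (uniq_map_inj_in (confluence_uniq_otgt qp_conf) aq bq ab).
Qed.

Lemma confluence_in_edges :
  exists a b, [/\ a \in p ++ q, b \in p ++ q, a != b, otgt a = j & otgt b = j].
Proof.
case/mapP: (confluence_target_in pq_conf) => a ap ja.
case/mapP: (confluence_target_in qp_conf) => b bq jb.
exists a, b; split; rewrite ?mem_cat ?ap ?bq ?orbT //.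
by apply/eqP => ab; apply: (confluence_disjoint ap); rewrite ab.
Qed.

Lemma confluence_cycle_ucycle : Defs.ucycle src tgt i (confluence_cycle p q).
Proof.
apply/and4P; split.
- case: p p_walk => [/eqP ij|//]; move: (confluence_neq pq_conf).
  by rewrite ij eqxx.
- exact: uwalk_cat (dwalk_uwalk_fwd p_walk) (dwalk_uwalk_bwd q_walk).
- rewrite map_fst_confluence_cycle cat_uniq rev_uniq.
  rewrite (map_uniq (confluence_uniq_otgt pq_conf)).
  rewrite (map_uniq (confluence_uniq_otgt qp_conf)) andbT /=.
  by apply/hasPn => e; rewrite mem_rev => qe; apply/negP => /confluence_disjoint /(_ qe).
- rewrite map_uto_confluence_cycle cat_uniq rev_uniq.
  rewrite (confluence_uniq_otgt pq_conf) (confluence_uniq_osrc qp_conf) andbT /=.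
  apply/hasPn => x; rewrite mem_rev => xq; apply/negP => xp.
  have [xi|xj] : x = i \/ x = j.
    apply: (confluence_common pq_conf (x := x)); first by rewrite in_cons xp orbT.
    by rewrite (dwalk_dverts q_walk) mem_rcons in_cons xq orbT.
  + by move: (confluence_source_notin pq_conf); rewrite -xi xp.
  + by move: (confluence_target_notin qp_conf); rewrite -xj xq.
Qed.

Lemma confluence_cycle_nodes e :
  e \in p ++ q -> (osrc e \in cycle_nodes (confluence_cycle p q)) &&
                  (otgt e \in cycle_nodes (confluence_cycle p q)).
Proof.
rewrite !mem_confluence_cycle_nodes mem_cat => /orP[pe|qe].
  rewrite (map_f otgt pe) andbT.
  have := dwalk_mem_osrc p_walk pe; rewrite in_cons.
  by case/orP=> [/eqP->|->]; rewrite ?(confluence_source_in qp_conf) ?orbT.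
rewrite (map_f osrc qe) orbT.
have := dverts_mem_otgt src tgt o i qe; rewrite (dwalk_dverts q_walk) mem_rcons in_cons.
by case/orP=> [/eqP->|->]; rewrite ?(confluence_target_in pq_conf) ?orbT.
Qed.

End ConfluenceCycle.

Lemma confluence_target_unique i1 j1 p1 q1 i2 j2 p2 q2 :
  conf i1 j1 p1 q1 -> conf i2 j2 p2 q2 ->
  cycle_edges (confluence_cycle p1 q1) = cycle_edges (confluence_cycle p2 q2) ->
  j1 = j2.
Proof.
move=> C1 C2 same_edges.
have [a [b [a1 b1 nab aj bj]]] := confluence_in_edges C1.
have mem12 e : e \in p1 ++ q1 -> e \in p2 ++ q2.
  by rewrite -!mem_confluence_cycle_edges same_edges.
rewrite -aj; apply: (confluence_sink C2 (mem12 _ a1) (mem12 _ b1) nab).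
by rewrite aj bj.
Qed.

Hypothesis cactus_graph : cactus src tgt.

Lemma cactus_confluence_target i1 j1 p1 q1 i2 j2 p2 q2 e :
  conf i1 j1 p1 q1 -> conf i2 j2 p2 q2 -> e \in p1 ++ q1 -> e \in p2 ++ q2 ->
  j1 = j2.
Proof.
move=> C1 C2 e1 e2; apply: (confluence_target_unique C1 C2).
apply/eqP; apply: contraTT (no_loop e) => distinct_cycles.
have := cactus_graph (confluence_cycle_ucycle C1) (confluence_cycle_ucycle C2) distinct_cycles.
have /andP[s1 t1] := confluence_cycle_nodes C1 e1.
have /andP[s2 t2] := confluence_cycle_nodes C2 e2.
have /subset_leq_card : [set osrc e; otgt e] \subset
    cycle_nodes (confluence_cycle p1 q1) :&: cycle_nodes (confluence_cycle p2 q2).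
  by apply/subsetP => x; rewrite in_set2 in_setI => /orP[] /eqP ->; rewrite ?s1 ?s2 ?t1 ?t2.
by rewrite cards2 => /leq_trans /[apply]; rewrite ltnS leqn0 eqb0 negbK.
Qed.

Lemma mem_label e j : (j \in label src tgt o e) <->
  exists i p q, conf i j p q /\ e \in p ++ q.
Proof.
rewrite inE; split.
  move=> /decPP [i [p [q [C pq_e]]]]; exists i, p, q; split => //.
  by rewrite mem_cat; case: pq_e => ->; rewrite ?orbT.
move=> [i [p [q [C pq_e]]]]; apply/decPP; exists i, p, q; split => //.
by move: pq_e; rewrite mem_cat => /orP[]; [left | right].
Qed.

Lemma label_card e : #|label src tgt o e| <= 1.
Proof.
apply/card_le1_eqP => j1 j2 /mem_label [i1 [p1 [q1 [C1 e1]]]].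
by move=> /mem_label [i2 [p2 [q2 [C2 e2]]]]; exact: (cactus_confluence_target C2 C1 e2 e1).
Qed.

Lemma bag_rel_label e e' : bag_rel src tgt o e e' -> label src tgt o e = label src tgt o e'.
Proof.
case/andP=> _ /pred0Pn [j /andP [je je']].
apply/setP => k; apply/idP/idP => hk.
  have /card_le1_eqP/(_ j k je hk) -> := label_card e; exact: je'.
have /card_le1_eqP/(_ j k je' hk) -> := label_card e'; exact: je.
Qed.

Lemma bag_labelE e : bag_label src tgt o e = label src tgt o e.
Proof.
apply/eqP; rewrite eqEsubset; apply/andP; split; last first.
  by apply: (bigcup_max e) => //; rewrite inE connect0.
apply/bigcupsP => e'; rewrite inE => /connectP [s].
elim: s e => [|e'' s IH] e /=; first by move=> _ ->; apply: subxx.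
by case/andP=> /bag_rel_label -> /IH.
Qed.

End Confluences.

Lemma extraction_order_no_loop (V E : finType) (src tgt : E -> V) o s :
  extraction_order src tgt o s -> forall e, osrc src tgt o e != otgt src tgt o e.
Proof. by case=> acyclic _ e; apply: contraNneq (acyclic e) => ->; rewrite connect0. Qed.

Theorem theorem33 (V E : finType) (src tgt : E -> V) :
  cactus src tgt ->
  forall (o : E -> bool) (s : V),
    extraction_order src tgt o s -> ew src tgt o <= 2.
Proof.
move=> cactus_graph o s /extraction_order_no_loop no_loop.
rewrite /ew ltnS; apply/bigmax_leqP => e _.
by rewrite bag_labelE //; apply: label_card.
Qed.
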